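(* Let $\rho_\lozenge=\rho(1/2,\sqrt{15}/2)$ be the planar unit rhombus with diagonals $1/2$ and $\sqrt{15}/2$, and let $2\rho_\lozenge$ be its dilation by factor $2$ (a planar rhombus with side length $2$ and diagonals $1$ and $\sqrt{15}$, regarded as a closed polygon with $8$ unit edges). If $2\rho_\lozenge$ cannot be domed, then the isosceles triangle with side lengths $(2,2,1)$ cannot be domed and $\rho_\lozenge$ cannot be domed.
   Context: A unit rhombus $\rho(a,b)$ is a closed polygon $[v_1v_2v_3v_4]$ in $\mathbb{R}^3$ with four sides of length $1$ and $|v_1v_3|=a$, $|v_2v_4|=b$. Polygons with integer side lengths are regarded as polygons with unit edges by subdividing each side into unit segments. A closed polygon with unit edges can be domed if there is a finite connected 2-dimensional simplicial complex which is a compact surface with a single boundary cycle, with a map to $\mathbb{R}^3$ linear on simplices sending each triangle to a unit equilateral triangle and the boundary cycle onto the polygon vertex by vertex in cyclic order. *)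

From Stdlib Require Import Reals.
From mathcomp Require Import all_boot.

Set Implicit Arguments.
Unset Strict Implicit.
Unset Printing Implicit Defensive.

Local Open Scope R_scope.
Definition point := (R * R * R)%type.

Definition pt (x y z : R) : point := (x, y, z).

Definition dist2 (p q : point) : R :=
  let '(x1, y1, z1) := p in
  let '(x2, y2, z2) := q in
  ((x1 - x2) * (x1 - x2) + (y1 - y2) * (y1 - y2) + (z1 - z2) * (z1 - z2)).

(* A closed polygon is the cyclic sequence of its vertices p_0,...,p_{n-1}
   (edges p_i p_{i+1 mod n}). *)
Definition polygon := seq point.

Local Close Scope R_scope.
Section Complex.
Variable V : finType.
Variable T : {set {set V}}.   (* the triangles (2-simplices) *)

Definition cedge (u v : V) : bool :=
  (u != v) && [exists t in T, (u \in t) && (v \in t)].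

Definition edge_mult (u v : V) : nat := #|[set t in T | (u \in t) && (v \in t)]|.

Definition bdry_edge (u v : V) : bool := cedge u v && (edge_mult u v == 1).

Definition link_rel (v : V) : rel V :=
  fun w x => (w != x) && [exists t in T, t == [set v; w; x]].

(* T is a finite connected 2-dimensional simplicial complex which is a
   compact surface (with boundary): pure of dimension 2, every edge lies in
   one or two triangles, and the link of every vertex is connected
   (hence a path or a cycle). *)
Definition is_surface_complex : Prop :=
  [/\ forall t, t \in T -> #|t| = 3,
      forall v : V, exists2 t, t \in T & v \in t,
      forall u v : V, cedge u v -> edge_mult u v = 1 \/ edge_mult u v = 2,
      forall v w x : V, cedge v w -> cedge v x -> connect (link_rel v) w x
    & forall u v : V, connect cedge u v].

(* b : 'I_n -> V enumerates the (single) boundary cycle in cyclic order. *)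
Definition single_boundary_cycle (n : nat) (b : 'I_n -> V) : Prop :=
  injective b /\
  forall u v : V, bdry_edge u v <->
    exists i j : 'I_n, j = (i.+1 %% n) :> nat /\
      ((u = b i /\ v = b j) \/ (u = b j /\ v = b i)).

(* f : V -> R^3 (extended linearly on simplices) sends every triangle to a
   unit equilateral triangle. *)
Definition unit_triangles (f : V -> point) : Prop :=
  forall t, t \in T -> forall u v, u \in t -> v \in t -> u != v ->
    dist2 (f u) (f v) = R1.

End Complex.

Definition domable (P : polygon) : Prop :=
  exists (V : finType) (T : {set {set V}}) (f : V -> point)
         (b : 'I_(size P) -> V),
    [/\ is_surface_complex T,
        single_boundary_cycle T b,
        unit_triangles T f
      & forall i : 'I_(size P), f (b i) = nth (pt 0 0 0) P i].

Local Open Scope R_scope.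
Definition s15 : R := sqrt 15.

(* rho_diamond = rho(1/2, sqrt15/2): v1v3 = 1/2, v2v4 = sqrt15/2. *)
Definition rho_diamond : polygon :=
  [:: pt (-1/4) 0 0; pt 0 (s15/4) 0; pt (1/4) 0 0; pt 0 (-(s15/4)) 0].

(* 2 rho_diamond, each side of length 2 subdivided at its midpoint. *)
Definition rho_diamond2 : polygon :=
  [:: pt (-1/2) 0 0; pt (-1/4) (s15/4) 0;
      pt 0 (s15/2) 0; pt (1/4) (s15/4) 0;
      pt (1/2) 0 0; pt (1/4) (-(s15/4)) 0;
      pt 0 (-(s15/2)) 0; pt (-1/4) (-(s15/4)) 0].

(* isosceles triangle with sides (2,2,1), sides of length 2 subdivided. *)
Definition tri221 : polygon :=
  [:: pt (-1/2) 0 0; pt (1/2) 0 0; pt (1/4) (s15/4) 0;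
      pt 0 (s15/2) 0; pt (-1/4) (s15/4) 0].

From Stdlib Require Import Reals Lra.
From mathcomp Require Import all_boot zify.

Set Implicit Arguments.
Unset Strict Implicit.
Unset Printing Implicit Defensive.

(* Both claims are instances of one principle: domes can be glued.  If two
   domed polygons share a boundary arc, the union of the two domes along
   that arc is a dome of the polygon bounding the union of the two regions.
   - The triangle (2,2,1) and its mirror image in its base of length 1 are
     glued along the base; the union is 2ρ◊.
   - Four translates of ρ◊ (west, north, east, south of the origin) tile
     2ρ◊; attaching them one at a time along boundary arcs gives a dome of
     2ρ◊.
   Hence a dome of the triangle or of ρ◊ yields a dome of 2ρ◊.
   Doming is invariant under isometries of R^3, and the theorem follows from
   four explicit gluings. *)

Definition cyc_adj (n i j : nat) : bool := (j == i.+1 %% n) || (i == j.+1 %% n).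

Lemma cyc_adj_sym n i j : cyc_adj n i j = cyc_adj n j i.
Proof. by rewrite /cyc_adj orbC. Qed.

Lemma cyc_adjP n (i j : 'I_n) : cyc_adj n i j ->
  [\/ (j : nat) = i.+1, (i : nat) = j.+1, i.+1 = n /\ (j : nat) = 0
    | j.+1 = n /\ (i : nat) = 0].
Proof.
have succ_mod (k : 'I_n) : k.+1 %% n = if k.+1 == n then 0 else k.+1.
  case: eqP => [->|nk]; first by rewrite modnn.
  by rewrite modn_small //; have := ltn_ord k; lia.
rewrite /cyc_adj => /orP[] /eqP; rewrite succ_mod; case: eqP => E H.
- by apply: Or43.
- by apply: Or41.
- by apply: Or44.
- by apply: Or42.
Qed.

Lemma cyc_adj_no_triangle n (i j k : 'I_n) : 3 < n ->
  i != j -> j != k -> i != k -> cyc_adj n i j -> cyc_adj n j k -> cyc_adj n i k ->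
  False.
Proof.
move=> n_gt3 /eqP ij /eqP jk /eqP ik.
have val_neq (x y : 'I_n) : x <> y -> (x : nat) <> y.
  by move=> xy E; apply: xy; apply: val_inj.
move: (val_neq _ _ ij) (val_neq _ _ jk) (val_neq _ _ ik) => ij' jk' ik'.
move: (ltn_ord i) (ltn_ord j) (ltn_ord k) => i_lt j_lt k_lt.
move=> /cyc_adjP a1 /cyc_adjP a2 /cyc_adjP a3.
by case: a1 => [?|?|[? ?]|[? ?]]; case: a2 => [?|?|[? ?]|[? ?]];
   case: a3 => [?|?|[? ?]|[? ?]]; lia.
Qed.

Section Complex.
Variables (V : finType) (T : {set {set V}}).

Lemma cedgeE u v : cedge T u v = (u != v) && (0 < edge_mult T u v).
Proof.
rewrite /cedge /edge_mult card_gt0; congr (_ && _).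
apply/existsP/set0Pn => [[t /andP[tT uvt]]|[t]].
  by exists t; rewrite inE tT.
by rewrite inE => /andP[tT uvt]; exists t; rewrite tT.
Qed.

Lemma bdry_edgeE u v : bdry_edge T u v = (u != v) && (edge_mult T u v == 1).
Proof.
rewrite /bdry_edge cedgeE.
by case: (edge_mult T u v) => [|[|k]]; rewrite ?andbF ?andbT.
Qed.

Lemma cedge_of_triangle t u v :
  t \in T -> u \in t -> v \in t -> u != v -> cedge T u v.
Proof.
by move=> tT ut vt uv; rewrite /cedge uv; apply/existsP; exists t; rewrite tT ut vt.
Qed.

Section Boundary.
Variables (n : nat) (b : 'I_n -> V).

Lemma boundary_cycleP : single_boundary_cycle T b <->
  injective b /\ forall u v, bdry_edge T u v <->
    exists i j : 'I_n, [&& cyc_adj n i j, u == b i & v == b j].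
Proof.
have adjE u v : (exists i j : 'I_n, j = (i.+1 %% n) :> nat /\
      (u = b i /\ v = b j \/ u = b j /\ v = b i)) <->
    exists i j : 'I_n, [&& cyc_adj n i j, u == b i & v == b j].
  split=> [[i [j [ij [[-> ->]|[-> ->]]]]]|[i [j /and3P[+ /eqP-> /eqP->]]]].
  - by exists i, j; rewrite /cyc_adj ij !eqxx.
  - by exists j, i; rewrite /cyc_adj ij !eqxx orbT.
  - case/orP=> /eqP ij; first by exists i, j; split=> //; left.
    by exists j, i; split=> //; right.
by split=> -[b_inj bdryP]; split=> // u v; rewrite bdryP adjE.
Qed.

Lemma boundary_cycle_adj i j : single_boundary_cycle T b ->
  bdry_edge T (b i) (b j) <-> cyc_adj n i j.
Proof.
case/boundary_cycleP=> b_inj ->.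
split=> [[i' [j' /and3P[adj /eqP/b_inj -> /eqP/b_inj ->]]] //|adj].
by exists i, j; rewrite adj !eqxx.
Qed.

End Boundary.
End Complex.

Local Open Scope R_scope.
Local Notation origin := (pt 0 0 0).
Local Close Scope R_scope.

Lemma homo_connect (A B : finType) (e : rel A) (e' : rel B) (h : A -> B) :
  {homo h : x y / e x y >-> e' x y} ->
  forall x y, connect e x y -> connect e' (h x) (h y).
Proof.
move=> h_homo x y /connectP[p px ->]; apply/connectP; exists (map h p).
  exact: homo_path px.
by rewrite last_map.
Qed.

Section Glue.
Variables (V1 V2 : finType) (T1 : {set {set V1}}) (T2 : {set {set V2}}).
Variables (f1 : V1 -> point) (f2 : V2 -> point) (P1 P2 : polygon).
Local Notation n1 := (size P1).
Local Notation n2 := (size P2).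
Variables (b1 : 'I_n1 -> V1) (b2 : 'I_n2 -> V2).

Hypothesis surf1 : is_surface_complex T1.
Hypothesis bcycle1 : single_boundary_cycle T1 b1.
Hypothesis unit1 : unit_triangles T1 f1.
Hypothesis pos1 : forall i, f1 (b1 i) = nth origin P1 i.
Hypothesis surf2 : is_surface_complex T2.
Hypothesis bcycle2 : single_boundary_cycle T2 b2.
Hypothesis unit2 : unit_triangles T2 f2.
Hypothesis pos2 : forall j, f2 (b2 j) = nth origin P2 j.

(* Vertex j of P2 is identified with vertex i of P1 when share j = Some i.
   The shared vertices form a nonempty common arc of both boundaries: the
   identification is injective, preserves consecutiveness and positions,
   and every shared vertex has a shared neighbour on the arc.  Moreover two
   shared vertices at unit distance are consecutive, so that the gluing
   creates no edge besides those of the arc.  Finally P2 has at least four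
   vertices, so that no triangle of T2 has its three vertices on the arc. *)
Variable share : 'I_n2 -> option 'I_n1.
Hypothesis n2_gt3 : 3 < n2.
Hypothesis share_inj : forall j j' i, share j = Some i -> share j' = Some i -> j = j'.
Hypothesis share_nonempty : exists j i, share j = Some i.
Hypothesis share_arc : forall j i, share j = Some i ->
  exists j' i', share j' = Some i' /\ cyc_adj n1 i i'.
Hypothesis share_adj : forall j j' i i', share j = Some i -> share j' = Some i' ->
  cyc_adj n2 j j' = cyc_adj n1 i i'.
Hypothesis share_pos : forall j i, share j = Some i -> nth origin P1 i = nth origin P2 j.
Hypothesis share_unit : forall j j' i i', share j = Some i -> share j' = Some i' ->
  j <> j' -> dist2 (nth origin P1 i) (nth origin P1 i') = R1 -> cyc_adj n1 i i'.
Variable dummy : V1.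

Definition shared1 i := [exists j, share j == Some i].
Definition shared2 j := share j != None.

Definition lift2 j : 'I_n1 + 'I_n2 := if share j is Some i then inl i else inr j.

(* The glued complex: its vertices are those of T1 and the unshared vertices
   of T2; a shared vertex of T2 is sent to its partner in T1. *)
Definition glued2 : {set V2} := [set b2 j | j in shared2].
Definition partner (v : V2) : V1 :=
  if [pick j | b2 j == v] is Some j then
    if share j is Some i then b1 i else dummy
  else dummy.
Definition gvertex := (V1 + {v : V2 | v \notin glued2})%type.
Definition in1 (a : V1) : gvertex := inl a.
Definition in2 (v : V2) : gvertex :=
  if (insub v : option {v : V2 | v \notin glued2}) is Some w then inr w
  else inl (partner v).
Definition tri1 (t : {set V1}) : {set gvertex} := in1 @: t.
Definition tri2 (t : {set V2}) : {set gvertex} := in2 @: t.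
Definition gtriangles : {set {set gvertex}} := tri1 @: T1 :|: tri2 @: T2.
Definition gmap (x : gvertex) : point :=
  match x with inl a => f1 a | inr w => f2 (val w) end.

Lemma b1_inj : injective b1. Proof. by case: bcycle1. Qed.
Lemma b2_inj : injective b2. Proof. by case: bcycle2. Qed.

Lemma shared1P i : reflect (exists j, share j = Some i) (shared1 i).
Proof. by apply: (iffP existsP) => -[j /eqP sj]; exists j. Qed.

Lemma glued2P v : v \in glued2 -> exists j i, share j = Some i /\ v = b2 j.
Proof.
case/imsetP=> j; rewrite unfold_in /shared2; case sj: (share j) => [i|] // _ ->.
by exists j, i.
Qed.

Lemma in2_shared j i : share j = Some i -> in2 (b2 j) = in1 (b1 i).
Proof.
move=> sj; rewrite /in2 insubF; last first.
  by apply: negbF; apply: imset_f; rewrite unfold_in /shared2 sj.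
rewrite /partner; case: pickP => [j' /eqP/b2_inj -> | /(_ j)]; first by rewrite sj.
by rewrite eqxx.
Qed.

Lemma in2_unshared v (vN : v \notin glued2) : in2 v = inr (Sub v vN).
Proof. by rewrite /in2 insubT. Qed.

Lemma in2_val (w : {v : V2 | v \notin glued2}) : in2 (val w) = inr w.
Proof. by rewrite /in2 valK. Qed.

Lemma in2_in1 v a : in2 v = in1 a ->
  exists j i, [/\ share j = Some i, v = b2 j & a = b1 i].
Proof.
case: (boolP (v \in glued2)) => [/glued2P[j [i [sj ->]]]|vN];
  last by rewrite in2_unshared.
by rewrite (in2_shared sj) => -[<-]; exists j, i.
Qed.

Lemma in1_inj : injective in1. Proof. by move=> a a' []. Qed.

Lemma in2_inj : injective in2.
Proof.
move=> v v'.
case: (boolP (v \in glued2)) => [/glued2P[j [i [sj ->]]]|vN];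
case: (boolP (v' \in glued2)) => [/glued2P[j' [i' [sj' ->]]]|v'N].
- rewrite (in2_shared sj) (in2_shared sj') => -[/b1_inj ii'].
  by rewrite ii' in sj; rewrite (share_inj sj sj').
- by rewrite (in2_shared sj) in2_unshared.
- by rewrite (in2_shared sj') in2_unshared.
- by rewrite !in2_unshared => -[].
Qed.

(* The map of the glued complex extends f2, thanks to [share_pos]. *)
Lemma gmap_in2 v : gmap (in2 v) = f2 v.
Proof.
case: (boolP (v \in glued2)) => [/glued2P[j [i [sj ->]]]|vN];
  last by rewrite in2_unshared.
by rewrite (in2_shared sj) /= pos1 pos2 (share_pos sj).
Qed.

Lemma shared_cedge2 j j' i i' : share j = Some i -> share j' = Some i' -> j != j' ->
  cedge T2 (b2 j) (b2 j') -> cyc_adj n1 i i'.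
Proof.
move=> sj sj' /eqP jj' /andP[bb /existsP[t /andP[tT /andP[jt j't]]]].
apply: (share_unit sj sj' jj'); rewrite (share_pos sj) (share_pos sj') -!pos2.
exact: unit2 tT _ _ jt j't bb.
Qed.

Lemma shared_cedge1 j j' i i' : share j = Some i -> share j' = Some i' -> j != j' ->
  cedge T1 (b1 i) (b1 i') -> cyc_adj n1 i i'.
Proof.
move=> sj sj' /eqP jj' /andP[bb /existsP[t /andP[tT /andP[it i't]]]].
apply: (share_unit sj sj' jj'); rewrite -!pos1.
exact: unit1 tT _ _ it i't bb.
Qed.

(* No triangle of T2 is glued onto a triangle of T1: its three vertices
   would be shared and pairwise consecutive on P2. *)
Lemma tri1_neq_tri2 (t1 : {set V1}) (t2 : {set V2}) :
  t1 \in T1 -> t2 \in T2 -> tri1 t1 <> tri2 t2.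
Proof.
move=> t1T t2T E.
have: 2 < #|t2| by case: surf2 => card3 _ _ _ _; rewrite card3.
case/card_gt2P=> x [y [z [[xt yt zt] [xy yz zx]]]].
have shared w : w \in t2 -> exists j i, share j = Some i /\ w = b2 j.
  move=> wt; have: in2 w \in tri1 t1 by rewrite E; apply: imset_f.
  by case/imsetP=> a _ /in2_in1[j [i [sj -> _]]]; exists j, i.
case: (shared x xt) => jx [ix [sx Ex]]; case: (shared y yt) => jy [iy [sy Ey]].
case: (shared z zt) => jz [iz [sz Ez]]; subst x y z.
have neq (j j' : 'I_n2) : b2 j != b2 j' -> j != j'.
  by apply: contra => /eqP ->.
have adj (j j' : 'I_n2) i i' : b2 j \in t2 -> b2 j' \in t2 -> b2 j != b2 j' ->
    share j = Some i -> share j' = Some i' -> cyc_adj n2 j j'.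
  move=> jt j't jj' sj sj'; rewrite (share_adj sj sj').
  apply: (shared_cedge2 sj sj'); first exact: neq.
  exact: cedge_of_triangle t2T _ _ _.
apply: (@cyc_adj_no_triangle _ jx jy jz n2_gt3).
- exact: neq.
- exact: neq.
- by rewrite eq_sym; apply: neq.
- exact: adj xy sx sy.
- exact: adj yz sy sz.
- by rewrite cyc_adj_sym; apply: adj zx sz sx.
Qed.

Lemma tri1_glued (t : {set V1}) : t \in T1 -> tri1 t \in gtriangles.
Proof. by move=> tT; rewrite inE; apply/orP; left; apply: imset_f. Qed.

Lemma tri2_glued (t : {set V2}) : t \in T2 -> tri2 t \in gtriangles.
Proof. by move=> tT; rewrite inE; apply/orP; right; apply: imset_f. Qed.

Definition mult1 (u v : gvertex) :=
  #|[set t in T1 | (u \in tri1 t) && (v \in tri1 t)]|.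
Definition mult2 (u v : gvertex) :=
  #|[set t in T2 | (u \in tri2 t) && (v \in tri2 t)]|.

(* Each glued triangle comes from exactly one copy, so edge multiplicities
   add up. *)
Lemma glue_edge_mult u v : edge_mult gtriangles u v = mult1 u v + mult2 u v.
Proof.
rewrite /edge_mult /mult1 /mult2.
have -> : [set t in gtriangles | (u \in t) && (v \in t)] =
  tri1 @: [set t in T1 | (u \in tri1 t) && (v \in tri1 t)] :|:
  tri2 @: [set t in T2 | (u \in tri2 t) && (v \in tri2 t)].
  apply/setP => t; rewrite !inE; apply/idP/idP.
  - case/andP => /orP[] /imsetP[t' t'T ->] uvt; apply/orP; [left|right];
      by apply/imsetP; exists t' => //; rewrite inE t'T.
  - case/orP=> /imsetP[t']; rewrite inE => /andP[t'T uvt] ->; rewrite uvt andbT;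
      apply/orP; [left|right]; exact: imset_f.
rewrite cardsU !card_imset; [|exact: imset_inj in2_inj|exact: imset_inj in1_inj].
rewrite -[RHS]subn0; congr (_ - _); apply/eqP; rewrite cards_eq0; apply/eqP/setP=> t.
rewrite !inE; apply/negP => /andP[/imsetP[t1 + ->] /imsetP[t2 +]].
by rewrite !inE => /andP[t1T _] /andP[t2T _]; apply: tri1_neq_tri2.
Qed.

Lemma mult1_in1 a a' : mult1 (in1 a) (in1 a') = edge_mult T1 a a'.
Proof.
rewrite /mult1 /edge_mult; apply: eq_card=> t.
by rewrite !inE !mem_imset //; exact: in1_inj.
Qed.

Lemma mult2_in2 x y : mult2 (in2 x) (in2 y) = edge_mult T2 x y.
Proof.
rewrite /mult2 /edge_mult; apply: eq_card=> t.
by rewrite !inE !mem_imset //; exact: in2_inj.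
Qed.

Lemma mult1_gt0 u v : 0 < mult1 u v -> exists a a', u = in1 a /\ v = in1 a'.
Proof.
case/card_gt0P=> t; rewrite inE => /andP[_ /andP[/imsetP[a _ ->] /imsetP[a' _ ->]]].
by exists a, a'.
Qed.

Lemma mult2_gt0 u v : 0 < mult2 u v -> exists x y, u = in2 x /\ v = in2 y.
Proof.
case/card_gt0P=> t; rewrite inE => /andP[_ /andP[/imsetP[x _ ->] /imsetP[y _ ->]]].
by exists x, y.
Qed.

Lemma shared_edge_mult j j' i i' : share j = Some i -> share j' = Some i' -> j != j' ->
  (edge_mult T1 (b1 i) (b1 i') = 0 /\ edge_mult T2 (b2 j) (b2 j') = 0) \/
  (edge_mult T1 (b1 i) (b1 i') = 1 /\ edge_mult T2 (b2 j) (b2 j') = 1).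
Proof.
move=> sj sj' jj'.
have ii' : i != i'.
  by apply: contra jj' => /eqP ii'; rewrite ii' in sj; apply/eqP; exact: share_inj sj sj'.
case adj: (cyc_adj n1 i i').
- right; split.
    by have /andP[_ /eqP] := (boundary_cycle_adj i i' bcycle1).2 adj.
  have adj2 : cyc_adj n2 j j' by rewrite (share_adj sj sj').
  by have /andP[_ /eqP] := (boundary_cycle_adj j j' bcycle2).2 adj2.
- left; split; apply/eqP; rewrite eqn0Ngt; apply/negP => pos; move: adj.
    have -> // : cyc_adj n1 i i'.
    by apply: (shared_cedge1 sj sj' jj'); rewrite cedgeE pos (inj_eq b1_inj) ii'.
  have -> // : cyc_adj n1 i i'.
  by apply: (shared_cedge2 sj sj' jj'); rewrite cedgeE pos (inj_eq b2_inj) jj'.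
Qed.

Lemma mult_both_gt0 u v : 0 < mult1 u v -> 0 < mult2 u v -> u != v ->
  mult1 u v = 1 /\ mult2 u v = 1.
Proof.
move=> pos1' pos2' uv.
case: (mult1_gt0 pos1') => a [a' [Eu Ev]]; case: (mult2_gt0 pos2') => x [y [Eu' Ev']].
subst u v.
move: (esym Eu') => /in2_in1[j [i [sj Ex Ea]]].
move: (esym Ev') => /in2_in1[j' [i' [sj' Ey Ea']]].
have jj' : j != j' by apply: contra uv => /eqP jj'; rewrite Eu' Ev' Ex Ey jj'.
move: pos1' pos2'; rewrite mult1_in1 Eu' Ev' mult2_in2 Ex Ey Ea Ea'.
by case: (shared_edge_mult sj sj' jj') => [[-> ->]|[-> ->]].
Qed.

Lemma glue_edge_mult12 u v : cedge gtriangles u v ->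
  edge_mult gtriangles u v = 1 \/ edge_mult gtriangles u v = 2.
Proof.
rewrite cedgeE glue_edge_mult => /andP[uv pos].
case: (posnP (mult1 u v)) => [m10|p1]; case: (posnP (mult2 u v)) => [m20|p2].
- by rewrite m10 m20 in pos.
- rewrite m10 add0n.
  case: (mult2_gt0 p2) => x [y [Eu Ev]]; subst u v; rewrite mult2_in2 in p2 *.
  case: surf2 => _ _ mult12 _ _; apply: mult12.
  by rewrite cedgeE p2 andbT; apply: contra uv => /eqP ->.
- rewrite m20 addn0.
  case: (mult1_gt0 p1) => x [y [Eu Ev]]; subst u v; rewrite mult1_in1 in p1 *.
  case: surf1 => _ _ mult12 _ _; apply: mult12.
  by rewrite cedgeE p1 andbT; apply: contra uv => /eqP ->.
- by right; case: (mult_both_gt0 p1 p2 uv) => -> ->.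
Qed.

Definition bdry1 (u v : gvertex) := exists i i' : 'I_n1,
  [/\ cyc_adj n1 i i', ~~ (shared1 i && shared1 i'), u = in1 (b1 i) & v = in1 (b1 i')].
Definition bdry2 (u v : gvertex) := exists j j' : 'I_n2,
  [/\ cyc_adj n2 j j', ~~ (shared2 j && shared2 j'), u = in2 (b2 j) & v = in2 (b2 j')].

Lemma bdry_only1 a a' : a != a' -> edge_mult T1 a a' = 1 ->
  mult2 (in1 a) (in1 a') = 0 -> bdry1 (in1 a) (in1 a').
Proof.
move=> aa' m1 m20.
have: bdry_edge T1 a a' by rewrite bdry_edgeE aa' m1.
case/boundary_cycleP: bcycle1 => _ ->.
case=> i [i' /and3P[adj /eqP Ea /eqP Ea']]; exists i, i'; split=> //; last first.
- by rewrite Ea'.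
- by rewrite Ea.
apply/negP=> /andP[/shared1P[j sj] /shared1P[j' sj']].
have jj' : j != j'.
  by apply: contra aa' => /eqP jj'; rewrite Ea Ea'; move: sj; rewrite jj' sj' => -[->].
move: m20; rewrite Ea Ea' -(in2_shared sj) -(in2_shared sj') mult2_in2.
case: (shared_edge_mult sj sj' jj') => [[m10 _]|[_ ->]] //.
by move: m1; rewrite Ea Ea' m10.
Qed.

Lemma bdry_only2 x y : x != y -> edge_mult T2 x y = 1 ->
  mult1 (in2 x) (in2 y) = 0 -> bdry2 (in2 x) (in2 y).
Proof.
move=> xy m2 m10.
have: bdry_edge T2 x y by rewrite bdry_edgeE xy m2.
case/boundary_cycleP: bcycle2 => _ ->.
case=> j [j' /and3P[adj /eqP Ex /eqP Ey]]; exists j, j'; split=> //; last first.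
- by rewrite Ey.
- by rewrite Ex.
apply/negP=> /andP[]; rewrite /shared2.
case sj: (share j) => [i|] // _; case sj': (share j') => [i'|] // _.
have jj' : j != j' by apply: contra xy => /eqP jj'; rewrite Ex Ey jj'.
move: m10; rewrite Ex Ey (in2_shared sj) (in2_shared sj') mult1_in1.
case: (shared_edge_mult sj sj' jj') => [[_ m20]|[-> _]] //.
by move: m2; rewrite Ex Ey m20.
Qed.

Lemma bdry1_mult2 i i' : ~~ (shared1 i && shared1 i') ->
  mult2 (in1 (b1 i)) (in1 (b1 i')) = 0.
Proof.
move=> notshared; apply/eqP; rewrite eqn0Ngt; apply/negP => /mult2_gt0[x [y [Ex Ey]]].
move: (esym Ex) => /in2_in1 [j [i0 [sj _ /b1_inj Ei]]].
move: (esym Ey) => /in2_in1 [j' [i0' [sj' _ /b1_inj Ei']]].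
move/negP: notshared; apply; apply/andP; split; apply/shared1P.
  by exists j; rewrite sj Ei.
by exists j'; rewrite sj' Ei'.
Qed.

Lemma bdry2_mult1 j j' : ~~ (shared2 j && shared2 j') ->
  mult1 (in2 (b2 j)) (in2 (b2 j')) = 0.
Proof.
move=> notshared; apply/eqP; rewrite eqn0Ngt; apply/negP => /mult1_gt0[x [y [Ex Ey]]].
move: Ex => /in2_in1 [j0 [i0 [sj /b2_inj Ej _]]].
move: Ey => /in2_in1 [j0' [i0' [sj' /b2_inj Ej' _]]].
by move/negP: notshared; apply; rewrite /shared2 Ej Ej' sj sj'.
Qed.

Lemma glue_bdry_edge u v : bdry_edge gtriangles u v <-> bdry1 u v \/ bdry2 u v.
Proof.
rewrite bdry_edgeE glue_edge_mult; split.
- case/andP=> uv /eqP m12.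
  case: (posnP (mult1 u v)) => [m10|p1]; case: (posnP (mult2 u v)) => [m20|p2].
  + by rewrite m10 m20 in m12.
  + right; rewrite m10 add0n in m12.
    case: (mult2_gt0 p2) => x [y [Eu Ev]]; subst u v; rewrite mult2_in2 in m12.
    by apply: bdry_only2 m12 m10; apply: contra uv => /eqP ->.
  + left; rewrite m20 addn0 in m12.
    case: (mult1_gt0 p1) => x [y [Eu Ev]]; subst u v; rewrite mult1_in1 in m12.
    by apply: bdry_only1 m12 m20; apply: contra uv => /eqP ->.
  + by have [m11 m21] := mult_both_gt0 p1 p2 uv; rewrite m11 m21 in m12.
- case=> [[i [i' [adj notshared -> ->]]]|[j [j' [adj notshared -> ->]]]].
  + move: ((boundary_cycle_adj i i' bcycle1).2 adj); rewrite bdry_edgeE.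
    case/andP=> ii' /eqP m1.
    by rewrite mult1_in1 m1 bdry1_mult2 // (inj_eq in1_inj) ii'.
  + move: ((boundary_cycle_adj j j' bcycle2).2 adj); rewrite bdry_edgeE.
    case/andP=> jj' /eqP m2.
    by rewrite mult2_in2 m2 bdry2_mult1 // (inj_eq in2_inj) jj'.
Qed.

Lemma cedge_in1 a a' : cedge T1 a a' -> cedge gtriangles (in1 a) (in1 a').
Proof.
case/andP=> aa' /existsP[t /andP[tT /andP[ta ta']]].
rewrite /cedge (inj_eq in1_inj) aa' /=; apply/existsP; exists (tri1 t).
by rewrite tri1_glued //= !(mem_imset _ _ in1_inj) ta ta'.
Qed.

Lemma cedge_in2 x y : cedge T2 x y -> cedge gtriangles (in2 x) (in2 y).
Proof.
case/andP=> xy /existsP[t /andP[tT /andP[xt yt]]].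
rewrite /cedge (inj_eq in2_inj) xy /=; apply/existsP; exists (tri2 t).
by rewrite tri2_glued //= !(mem_imset _ _ in2_inj) xt yt.
Qed.

Lemma glue_cedge_cases u v : cedge gtriangles u v ->
  (exists a a', [/\ u = in1 a, v = in1 a' & cedge T1 a a']) \/
  (exists x y, [/\ u = in2 x, v = in2 y & cedge T2 x y]).
Proof.
rewrite cedgeE glue_edge_mult => /andP[uv]; case: (posnP (mult1 u v)) => [m10|p1] pos.
- right; rewrite m10 add0n in pos; case: (mult2_gt0 pos) => x [y [Eu Ev]].
  exists x, y; split => //; rewrite cedgeE -mult2_in2 -Eu -Ev pos andbT.
  by apply: contra uv => /eqP xy; rewrite Eu Ev xy.
- left; case: (mult1_gt0 p1) => a [a' [Eu Ev]].
  exists a, a'; split => //; rewrite cedgeE -mult1_in1 -Eu -Ev p1 andbT.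
  by apply: contra uv => /eqP aa'; rewrite Eu Ev aa'.
Qed.

Lemma link_in1 a w x : link_rel T1 a w x -> link_rel gtriangles (in1 a) (in1 w) (in1 x).
Proof.
rewrite /link_rel => /andP[wx /existsP[t /andP[tT /eqP Et]]].
rewrite (inj_eq in1_inj) wx /=; apply/existsP; exists (tri1 t).
by rewrite tri1_glued //= Et /tri1 !imsetU !imset_set1.
Qed.

Lemma link_in2 a w x : link_rel T2 a w x -> link_rel gtriangles (in2 a) (in2 w) (in2 x).
Proof.
rewrite /link_rel => /andP[wx /existsP[t /andP[tT /eqP Et]]].
rewrite (inj_eq in2_inj) wx /=; apply/existsP; exists (tri2 t).
by rewrite tri2_glued //= Et /tri2 !imsetU !imset_set1.
Qed.

Lemma link_connect1 a a1 a2 : cedge T1 a a1 -> cedge T1 a a2 ->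
  connect (link_rel gtriangles (in1 a)) (in1 a1) (in1 a2).
Proof.
case: surf1 => _ _ _ link_conn _ h1 h2.
exact: homo_connect (@link_in1 a) _ _ (link_conn _ _ _ h1 h2).
Qed.

Lemma link_connect2 a a1 a2 : cedge T2 a a1 -> cedge T2 a a2 ->
  connect (link_rel gtriangles (in2 a)) (in2 a1) (in2 a2).
Proof.
case: surf2 => _ _ _ link_conn _ h1 h2.
exact: homo_connect (@link_in2 a) _ _ (link_conn _ _ _ h1 h2).
Qed.

(* At a shared vertex the two links meet: the next vertex of the arc is a
   neighbour in both domes. *)
Lemma shared_hub a y : in1 a = in2 y ->
  exists a' y', [/\ cedge T1 a a', cedge T2 y y' & in1 a' = in2 y'].
Proof.
move/esym/in2_in1=> [j [i [sj -> ->]]].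
case: (share_arc sj) => j' [i' [sj' adj]].
exists (b1 i'), (b2 j'); split; last by rewrite (in2_shared sj').
  by have /andP[] := (boundary_cycle_adj i i' bcycle1).2 adj.
have adj2 : cyc_adj n2 j j' by rewrite (share_adj sj sj').
by have /andP[] := (boundary_cycle_adj j j' bcycle2).2 adj2.
Qed.

Lemma glue_link_connect v w x : cedge gtriangles v w -> cedge gtriangles v x ->
  connect (link_rel gtriangles v) w x.
Proof.
case/glue_cedge_cases=> [[a [a1 [-> -> h1]]]|[y [y1 [-> -> h1]]]];
case/glue_cedge_cases=> [[a' [a2 [Ev -> h2]]]|[y' [y2 [Ev -> h2]]]].
- by move/in1_inj: Ev h2 => <-; apply: link_connect1.
- case: (shared_hub Ev) => a3 [y3 [h3 h4 E3]].
  apply: (connect_trans (link_connect1 h1 h3)).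
  by rewrite E3 Ev; apply: link_connect2 h4 h2.
- case: (shared_hub (esym Ev)) => a3 [y3 [h3 h4 E3]].
  rewrite Ev; apply: (connect_trans _ (link_connect1 h3 h2)).
  by rewrite E3 -Ev; apply: link_connect2 h1 h4.
- by move/in2_inj: Ev h2 => <-; apply: link_connect2.
Qed.

(* Both copies are connected and meet in a shared vertex. *)
Lemma glue_connected u v : connect (cedge gtriangles) u v.
Proof.
case: share_nonempty => j0 [i0 s0].
have hub_conn w : connect (cedge gtriangles) w (in1 (b1 i0)) /\
                  connect (cedge gtriangles) (in1 (b1 i0)) w.
  case: w => [a|w].
    by case: surf1 => _ _ _ _ conn; split; apply: (homo_connect cedge_in1).
  rewrite -in2_val -(in2_shared s0).
  by case: surf2 => _ _ _ _ conn; split; apply: (homo_connect cedge_in2).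
exact: connect_trans (proj1 (hub_conn u)) (proj2 (hub_conn v)).
Qed.

Lemma glue_surface : is_surface_complex gtriangles.
Proof.
split.
- move=> t; rewrite inE => /orP[] /imsetP[t' t'T ->]; rewrite card_imset.
  + by case: surf1 => card3 _ _ _ _; exact: card3.
  + exact: in1_inj.
  + by case: surf2 => card3 _ _ _ _; exact: card3.
  + exact: in2_inj.
- case=> [a|w].
    case: surf1 => _ covered _ _ _; case: (covered a) => t tT ta.
    by exists (tri1 t); [apply: tri1_glued | apply: imset_f].
  case: surf2 => _ covered _ _ _; case: (covered (val w)) => t tT wt.
  by exists (tri2 t); [apply: tri2_glued | rewrite -in2_val; apply: imset_f].
- exact: glue_edge_mult12.
- exact: glue_link_connect.
- exact: glue_connected.
Qed.

Lemma glue_unit_triangles : unit_triangles gtriangles gmap.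
Proof.
move=> t; rewrite inE => /orP[] /imsetP[t' t'T ->] u v.
  move=> /imsetP[x xt ->] /imsetP[y yt ->] uv.
  by apply: unit1 t'T _ _ xt yt _; apply: contra uv => /eqP ->.
move=> /imsetP[x xt ->] /imsetP[y yt ->] uv.
by rewrite !gmap_in2; apply: unit2 t'T _ _ xt yt _; apply: contra uv => /eqP ->.
Qed.

(* The glued polygon P: its vertex k is vertex i of P1 (vertex k = inl i)
   or the unshared vertex j of P2 (vertex k = inr j).  Its edges are exactly
   the edges of P1 and P2 off the shared arc. *)
Variable P : polygon.
Variable vertex : 'I_(size P) -> 'I_n1 + 'I_n2.
Hypothesis vertex_inj : injective vertex.
Hypothesis vertex_unshared : forall k j, vertex k = inr j -> share j = None.
Hypothesis vertex_pos : forall k : 'I_(size P), nth origin P k =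
  match vertex k with inl i => nth origin P1 i | inr j => nth origin P2 j end.
Hypothesis vertex_adj : forall k k' : 'I_(size P), cyc_adj (size P) k k' ->
  (exists i i' : 'I_n1, [/\ vertex k = inl i, vertex k' = inl i',
     cyc_adj n1 i i' & ~~ (shared1 i && shared1 i')]) \/
  (exists j j' : 'I_n2, [/\ vertex k = lift2 j, vertex k' = lift2 j',
     cyc_adj n2 j j' & ~~ (shared2 j && shared2 j')]).
Hypothesis vertex_adj1 : forall i i' : 'I_n1,
  cyc_adj n1 i i' -> ~~ (shared1 i && shared1 i') ->
  exists k k' : 'I_(size P),
    [/\ cyc_adj (size P) k k', vertex k = inl i & vertex k' = inl i'].
Hypothesis vertex_adj2 : forall j j' : 'I_n2,
  cyc_adj n2 j j' -> ~~ (shared2 j && shared2 j') ->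
  exists k k' : 'I_(size P),
    [/\ cyc_adj (size P) k k', vertex k = lift2 j & vertex k' = lift2 j'].

Definition bvertex (s : 'I_n1 + 'I_n2) : gvertex :=
  match s with inl i => in1 (b1 i) | inr j => in2 (b2 j) end.
Definition gboundary (k : 'I_(size P)) := bvertex (vertex k).

Lemma bvertex_lift2 j : bvertex (lift2 j) = in2 (b2 j).
Proof. by rewrite /lift2; case sj: (share j) => [i|] //=; rewrite (in2_shared sj). Qed.

Lemma gboundary_inj : injective gboundary.
Proof.
move=> k k'; rewrite /gboundary => E; apply: vertex_inj; move: E.
case vk: (vertex k) => [i|j]; case vk': (vertex k') => [i'|j'] /=.
- by move/in1_inj/b1_inj ->.
- move/esym/in2_in1=> [j0 [i0 [sj /b2_inj Ej _]]].
  by move: (vertex_unshared vk'); rewrite Ej sj.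
- move/in2_in1=> [j0 [i0 [sj /b2_inj Ej _]]].
  by move: (vertex_unshared vk); rewrite Ej sj.
- by move/in2_inj/b2_inj ->.
Qed.

Lemma glue_boundary_cycle : single_boundary_cycle gtriangles gboundary.
Proof.
apply/boundary_cycleP; split; first exact: gboundary_inj.
move=> u v; rewrite glue_bdry_edge; split.
- case=> [[i [i' [adj notshared -> ->]]]|[j [j' [adj notshared -> ->]]]].
  + case: (vertex_adj1 adj notshared) => k [k' [adjk vk vk']].
    by exists k, k'; rewrite adjk /gboundary vk vk' !eqxx.
  + case: (vertex_adj2 adj notshared) => k [k' [adjk vk vk']].
    by exists k, k'; rewrite adjk /gboundary vk vk' !bvertex_lift2 !eqxx.
- case=> k [k' /and3P[adjk /eqP -> /eqP ->]].
  case: (vertex_adj adjk) => [[i [i' [vk vk' adj notshared]]]|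
                              [j [j' [vk vk' adj notshared]]]].
  + by left; exists i, i'; rewrite /gboundary vk vk'.
  + by right; exists j, j'; rewrite /gboundary vk vk' !bvertex_lift2.
Qed.

Lemma glue_boundary_pos k : gmap (gboundary k) = nth origin P k.
Proof.
rewrite vertex_pos /gboundary.
by case: (vertex k) => [i|j] /=; rewrite ?gmap_in2 ?pos1 ?pos2.
Qed.

Theorem glue_domes : domable P.
Proof.
exists gvertex, gtriangles, gmap, gboundary; split.
- exact: glue_surface.
- exact: glue_boundary_cycle.
- exact: glue_unit_triangles.
- exact: glue_boundary_pos.
Qed.

End Glue.

Definition all_below n (p : pred nat) := all p (iota 0 n).
Definition has_below n (p : pred nat) := has p (iota 0 n).

Lemma all_belowP n p : all_below n p -> forall k, k < n -> p k.
Proof. by move=> /allP pn k kn; apply: pn; rewrite mem_iota add0n. Qed.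

Lemma has_belowP n p : has_below n p -> exists2 k, k < n & p k.
Proof. by case/hasP=> k; rewrite mem_iota add0n => kn pk; exists k. Qed.

Lemma has_belowI n (p : pred nat) k : k < n -> p k -> has_below n p.
Proof. by move=> kn pk; apply/hasP; exists k; rewrite // mem_iota add0n. Qed.

Definition sum_val n1 n2 (s : 'I_n1 + 'I_n2) : nat + nat :=
  match s with inl i => inl (val i) | inr j => inr (val j) end.

Lemma sum_val_inj n1 n2 : injective (@sum_val n1 n2).
Proof. by case=> [i|j] [i'|j'] //= [] /val_inj ->. Qed.

(* The gluing lemma with the identification and the glued polygon described
   by functions on natural numbers; all the combinatorial side conditions
   are boolean tests that evaluate to true on concrete data, only the
   metric conditions remain as propositions. *)
Section GlueNat.
Variables (P1 P2 P : polygon).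
Local Notation n1 := (size P1).
Local Notation n2 := (size P2).
Local Notation m := (size P).
Variables (d1 : 'I_n1) (d2 : 'I_n2).
Variable shareN : nat -> option nat.
Variable vertexN : nat -> nat + nat.

Definition shared1N i := has_below n2 (fun j => shareN j == Some i).
Definition lift2N j : nat + nat := if shareN j is Some i then inl i else inr j.

Hypothesis n2_gt3 : 3 < n2.
Hypothesis shareN_range :
  all_below n2 (fun j => if shareN j is Some i then i < n1 else true).
Hypothesis vertexN_range :
  all_below m (fun k => match vertexN k with inl i => i < n1 | inr j => j < n2 end).
Hypothesis shareN_inj : all_below n2 (fun j => all_below n2 (fun j' =>
  (shareN j != None) && (shareN j == shareN j') ==> (j == j'))).
Hypothesis shareN_nonempty : has_below n2 (fun j => shareN j != None).
Hypothesis shareN_arc : all_below n2 (fun j => if shareN j is Some i then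
  has_below n2 (fun j' => if shareN j' is Some i' then cyc_adj n1 i i' else false)
  else true).
Hypothesis shareN_adj : all_below n2 (fun j => all_below n2 (fun j' =>
  match shareN j, shareN j' with
  | Some i, Some i' => cyc_adj n2 j j' == cyc_adj n1 i i'
  | _, _ => true end)).
Hypothesis shareN_pos : forall j i, j < n2 -> shareN j = Some i ->
  nth origin P1 i = nth origin P2 j.
Hypothesis shareN_unit : forall j j' i i', j < n2 -> j' < n2 ->
  shareN j = Some i -> shareN j' = Some i' -> j <> j' ->
  dist2 (nth origin P1 i) (nth origin P1 i') = R1 -> cyc_adj n1 i i'.
Hypothesis vertexN_inj : all_below m (fun k => all_below m (fun k' =>
  (vertexN k == vertexN k') ==> (k == k'))).
Hypothesis vertexN_unshared :
  all_below m (fun k => if vertexN k is inr j then shareN j == None else true).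
Hypothesis vertexN_pos : forall k, k < m -> nth origin P k =
  match vertexN k with inl i => nth origin P1 i | inr j => nth origin P2 j end.
Hypothesis vertexN_adj : all_below m (fun k => all_below m (fun k' =>
  cyc_adj m k k' ==>
  (match vertexN k, vertexN k' with
   | inl i, inl i' => cyc_adj n1 i i' && ~~ (shared1N i && shared1N i')
   | _, _ => false end
   || has_below n2 (fun j => has_below n2 (fun j' =>
        [&& vertexN k == lift2N j, vertexN k' == lift2N j', cyc_adj n2 j j'
          & ~~ ((shareN j != None) && (shareN j' != None))]))))).
Hypothesis vertexN_adj1 : all_below n1 (fun i => all_below n1 (fun i' =>
  cyc_adj n1 i i' && ~~ (shared1N i && shared1N i') ==>
  has_below m (fun k => has_below m (fun k' =>
    [&& cyc_adj m k k', vertexN k == inl i & vertexN k' == inl i'])))).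
Hypothesis vertexN_adj2 : all_below n2 (fun j => all_below n2 (fun j' =>
  cyc_adj n2 j j' && ~~ ((shareN j != None) && (shareN j' != None)) ==>
  has_below m (fun k => has_below m (fun k' =>
    [&& cyc_adj m k k', vertexN k == lift2N j & vertexN k' == lift2N j'])))).

Definition share_of (j : 'I_n2) : option 'I_n1 :=
  if shareN j is Some i then insub i else None.
Definition vertex_of (k : 'I_m) : 'I_n1 + 'I_n2 :=
  match vertexN k with inl i => inl (insubd d1 i) | inr j => inr (insubd d2 j) end.

Lemma share_ofE j i : share_of j = Some i <-> shareN j = Some (val i).
Proof.
rewrite /share_of; case sj: (shareN j) => [i'|] //.
have := all_belowP shareN_range (ltn_ord j); rewrite sj => i'_lt.
rewrite insubT; split=> [[<-] //|[ii']].
by congr Some; apply: val_inj; rewrite /= ii'.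
Qed.

Lemma share_of_None j : (share_of j == None) = (shareN j == None).
Proof.
rewrite /share_of; case sj: (shareN j) => [i|] //.
by have := all_belowP shareN_range (ltn_ord j); rewrite sj => i_lt; rewrite insubT.
Qed.

Lemma vertex_ofE k : sum_val (vertex_of k) = vertexN k.
Proof.
have := all_belowP vertexN_range (ltn_ord k).
by rewrite /vertex_of; case: (vertexN k) => [i|j] lt /=; rewrite insubdK.
Qed.

Lemma shared1E i : shared1 share_of i = shared1N i.
Proof.
apply/shared1P/idP => [[j /share_ofE sj]|/has_belowP[j jn /eqP sj]].
  by apply: (has_belowI (ltn_ord j)); rewrite sj.
by exists (Ordinal jn); apply/share_ofE.
Qed.

Lemma shared2E j : shared2 share_of j = (shareN j != None).
Proof. by rewrite /shared2 share_of_None. Qed.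

Lemma lift2E j : sum_val (lift2 share_of j) = lift2N j.
Proof.
rewrite /lift2 /lift2N; case sj: (share_of j) => [i|].
  by move/share_ofE: sj => ->.
by move: (share_of_None j); rewrite sj eqxx => /esym/eqP ->.
Qed.

Lemma vertex_of_lift2 k j : (vertex_of k == lift2 share_of j) = (vertexN k == lift2N j).
Proof. by rewrite -vertex_ofE -lift2E (inj_eq (@sum_val_inj _ _)). Qed.

Lemma vertex_of_inl k i : (vertex_of k == inl i) = (vertexN k == inl (val i)).
Proof.
rewrite -vertex_ofE -[inl (val i)]/(sum_val (inl i : 'I_n1 + 'I_n2)).
by rewrite (inj_eq (@sum_val_inj _ _)).
Qed.

Lemma share_of_inj j j' i : share_of j = Some i -> share_of j' = Some i -> j = j'.
Proof.
move=> /share_ofE sj /share_ofE sj'; apply: val_inj; apply/eqP.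
have := all_belowP (all_belowP shareN_inj (ltn_ord j)) (ltn_ord j').
by rewrite sj sj' eqxx; apply.
Qed.

Lemma share_of_nonempty : exists j i, share_of j = Some i.
Proof.
case/has_belowP: shareN_nonempty => j jn; case sj: (shareN j) => [i|] // _.
have := all_belowP shareN_range jn; rewrite sj => i_lt.
by exists (Ordinal jn), (Ordinal i_lt); apply/share_ofE.
Qed.

Lemma share_of_arc j i : share_of j = Some i ->
  exists j' i', share_of j' = Some i' /\ cyc_adj n1 i i'.
Proof.
move/share_ofE=> sj; have := all_belowP shareN_arc (ltn_ord j); rewrite sj.
case/has_belowP=> j' j'n; case sj': (shareN j') => [i'|] // adj.
have := all_belowP shareN_range j'n; rewrite sj' => i'_lt.
by exists (Ordinal j'n), (Ordinal i'_lt); split => //; apply/share_ofE.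
Qed.

Lemma share_of_adj j j' i i' : share_of j = Some i -> share_of j' = Some i' ->
  cyc_adj n2 j j' = cyc_adj n1 i i'.
Proof.
move=> /share_ofE sj /share_ofE sj'.
have := all_belowP (all_belowP shareN_adj (ltn_ord j)) (ltn_ord j').
by rewrite sj sj' => /eqP.
Qed.

Lemma share_of_pos j i : share_of j = Some i -> nth origin P1 i = nth origin P2 j.
Proof. by move/share_ofE; apply: shareN_pos. Qed.

Lemma share_of_unit j j' i i' : share_of j = Some i -> share_of j' = Some i' ->
  j <> j' -> dist2 (nth origin P1 i) (nth origin P1 i') = R1 -> cyc_adj n1 i i'.
Proof.
move=> /share_ofE sj /share_ofE sj' jj'; apply: shareN_unit sj sj' _ => //.
by move=> /val_inj.
Qed.

Lemma vertex_of_inj : injective vertex_of.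
Proof.
move=> k k' E; apply: val_inj; apply/eqP.
have := all_belowP (all_belowP vertexN_inj (ltn_ord k)) (ltn_ord k').
by rewrite -!vertex_ofE E eqxx; apply.
Qed.

Lemma vertex_of_unshared k j : vertex_of k = inr j -> share_of j = None.
Proof.
move=> E; apply/eqP; rewrite share_of_None.
by have := all_belowP vertexN_unshared (ltn_ord k); rewrite -vertex_ofE E.
Qed.

Lemma vertex_of_pos (k : 'I_m) : nth origin P k =
  match vertex_of k with inl i => nth origin P1 i | inr j => nth origin P2 j end.
Proof. by rewrite vertexN_pos // -vertex_ofE; case: (vertex_of k). Qed.

Lemma vertex_of_adj (k k' : 'I_m) : cyc_adj m k k' ->
  (exists i i' : 'I_n1, [/\ vertex_of k = inl i, vertex_of k' = inl i',
     cyc_adj n1 i i' & ~~ (shared1 share_of i && shared1 share_of i')]) \/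
  (exists j j' : 'I_n2, [/\ vertex_of k = lift2 share_of j,
     vertex_of k' = lift2 share_of j', cyc_adj n2 j j'
     & ~~ (shared2 share_of j && shared2 share_of j')]).
Proof.
move=> adjk.
have := all_belowP (all_belowP vertexN_adj (ltn_ord k)) (ltn_ord k').
rewrite adjk /= -!vertex_ofE; case/orP.
  case: (vertex_of k) => [i|j] //; case: (vertex_of k') => [i'|j'] //= /andP[adj notsh].
  by left; exists i, i'; rewrite !shared1E.
case/has_belowP=> j jn /has_belowP[j' j'n /and4P[E E' adj notsh]].
right; exists (Ordinal jn), (Ordinal j'n); split => //.
- by apply/eqP; rewrite vertex_of_lift2 -vertex_ofE.
- by apply/eqP; rewrite vertex_of_lift2 -vertex_ofE.
- by rewrite !shared2E.
Qed.

Lemma vertex_of_adj1 (i i' : 'I_n1) : cyc_adj n1 i i' ->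
  ~~ (shared1 share_of i && shared1 share_of i') ->
  exists k k' : 'I_m, [/\ cyc_adj m k k', vertex_of k = inl i & vertex_of k' = inl i'].
Proof.
move=> adj notsh.
have := all_belowP (all_belowP vertexN_adj1 (ltn_ord i)) (ltn_ord i').
rewrite -!shared1E adj notsh /=.
case/has_belowP=> k kn /has_belowP[k' k'n /and3P[adjk E E']].
by exists (Ordinal kn), (Ordinal k'n); split => //; apply/eqP; rewrite vertex_of_inl.
Qed.

Lemma vertex_of_adj2 (j j' : 'I_n2) : cyc_adj n2 j j' ->
  ~~ (shared2 share_of j && shared2 share_of j') ->
  exists k k' : 'I_m, [/\ cyc_adj m k k', vertex_of k = lift2 share_of j
                        & vertex_of k' = lift2 share_of j'].
Proof.
move=> adj notsh.
have := all_belowP (all_belowP vertexN_adj2 (ltn_ord j)) (ltn_ord j').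
rewrite -!shared2E adj notsh /=.
case/has_belowP=> k kn /has_belowP[k' k'n /and3P[adjk E E']].
by exists (Ordinal kn), (Ordinal k'n); split => //; apply/eqP; rewrite vertex_of_lift2.
Qed.

Theorem glue_domable (dome1 : domable P1) (dome2 : domable P2) : domable P.
Proof.
case: dome1 => V1 [T1 [f1 [b1 [surf1 bcycle1 unit1 pos1]]]].
case: dome2 => V2 [T2 [f2 [b2 [surf2 bcycle2 unit2 pos2]]]].
exact: (glue_domes surf1 bcycle1 unit1 pos1 surf2 bcycle2 unit2 pos2 n2_gt3
  share_of_inj share_of_nonempty share_of_arc share_of_adj share_of_pos share_of_unit
  (b1 d1) vertex_of_inj vertex_of_unshared vertex_of_pos
  vertex_of_adj vertex_of_adj1 vertex_of_adj2).
Qed.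

End GlueNat.

Local Open Scope R_scope.

Definition isometry (phi : point -> point) :=
  forall p q, dist2 (phi p) (phi q) = dist2 p q.

Lemma domable_isometry phi P : isometry phi -> domable P -> domable (map phi P).
Proof.
move=> iso [V [T [f [b [surf bcycle unit pos]]]]].
have size_eq := size_map phi P.
exists V, T, (phi \o f), (b \o cast_ord size_eq); split => //.
- case/boundary_cycleP: bcycle => b_inj bdry; apply/boundary_cycleP; split.
    exact: inj_comp b_inj (@cast_ord_inj _ _ size_eq).
  have adjE (i j : nat) : cyc_adj (size (map phi P)) i j = cyc_adj (size P) i j.
    by rewrite size_map.
  move=> u v; rewrite bdry; split=> -[i [j]]; rewrite ?adjE => adj.
    exists (cast_ord (esym size_eq) i), (cast_ord (esym size_eq) j).
    by rewrite adjE /= !cast_ordKV.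
  by exists (cast_ord size_eq i); exists (cast_ord size_eq j).
- by move=> t tT u v ut vt uv; rewrite /= iso; exact: unit tT _ _ ut vt uv.
- by move=> i; rewrite /= pos (nth_map origin) // -size_eq.
Qed.

Definition reflect_y (p : point) : point := let '(x, y, z) := p in (x, - y, z).
Definition translate (dx dy : R) (p : point) : point :=
  let '(x, y, z) := p in (x + dx, y + dy, z).

Lemma reflect_y_isometry : isometry reflect_y.
Proof. by case=> [[x y] z] [[x' y'] z']; rewrite /dist2 /=; ring. Qed.

Lemma translate_isometry dx dy : isometry (translate dx dy).
Proof. by case=> [[x y] z] [[x' y'] z']; rewrite /dist2 /=; ring. Qed.

Ltac point_eq := rewrite /pt /reflect_y /translate /=; congr (_, _, _); lra.

Local Close Scope R_scope.

(* 2ρ◊ is the union of the triangle (2,2,1), whose base is the segment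
   [-1/2, 1/2] of the x-axis, and of its mirror image in the x-axis.
   In this and the following gluings, the combinatorial conditions of
   [glue_domable] hold by evaluation and the two domes are in the context,
   so [by []] leaves only the metric conditions: positions of the shared
   vertices, shared vertices at unit distance, positions of the vertices of
   the glued polygon. *)
Lemma domable_tri221_rho_diamond2 : domable tri221 -> domable rho_diamond2.
Proof.
move=> dome.
have mirror_dome := domable_isometry reflect_y_isometry dome.
apply: (glue_domable (P1 := tri221) (P2 := map reflect_y tri221) (P := rho_diamond2)
  (shareN := fun j => match j with 0 => Some 0 | 1 => Some 1 | _ => None end)
  (vertexN := fun k => match k with
    | 0 => inl 0 | 1 => inl 4 | 2 => inl 3 | 3 => inl 2 | 4 => inl 1
    | 5 => inr 2 | 6 => inr 3 | _ => inr 4 end)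
  ord0 ord0); try by [].
- by move=> [|[|j]] i //= _ [<-]; point_eq.
- by move=> [|[|j]] [|[|j']] i i' //= _ _ [<-] [<-].
- by move=> [|[|[|[|[|[|[|[|k]]]]]]]] //= _; point_eq.
Qed.

Local Open Scope R_scope.

(* Four translates of ρ◊ tile 2ρ◊: the west one W (centred at (-1/4, 0)),
   the north one N (centred at (0, √15/4)), the east one E (centred at
   (1/4, 0)) and the south one S (centred at (0, -√15/4)); they all meet at
   the origin.  [rhombi_WN] and [rhombi_WNE] bound the unions W ∪ N and
   W ∪ N ∪ E. *)
Definition rhombi_WN : polygon :=
  [:: pt (-1/2) 0 0; pt (-1/4) (s15/4) 0; pt 0 (s15/2) 0;
      pt (1/4) (s15/4) 0; pt 0 0 0; pt (-1/4) (-(s15/4)) 0].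

Definition rhombi_WNE : polygon :=
  [:: pt (-1/2) 0 0; pt (-1/4) (s15/4) 0; pt 0 (s15/2) 0;
      pt (1/4) (s15/4) 0; pt (1/2) 0 0; pt (1/4) (-(s15/4)) 0;
      pt 0 0 0; pt (-1/4) (-(s15/4)) 0].

Local Close Scope R_scope.

(* W and N share the edge from (-1/4, √15/4) to the origin. *)
Lemma domable_rhombi_WN : domable rho_diamond -> domable rhombi_WN.
Proof.
move=> dome.
have west := domable_isometry (translate_isometry (-1/4) 0) dome.
have north := domable_isometry (translate_isometry 0 (s15/4)) dome.
apply: (glue_domable (P1 := map (translate (-1/4) 0) rho_diamond)
  (P2 := map (translate 0 (s15/4)) rho_diamond) (P := rhombi_WN)
  (shareN := fun j => match j with 0 => Some 1 | 3 => Some 2 | _ => None end)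
  (vertexN := fun k => match k with
    | 0 => inl 0 | 1 => inl 1 | 2 => inr 1 | 3 => inr 2 | 4 => inl 2 | _ => inl 3 end)
  ord0 ord0); try by [].
- by move=> [|[|[|[|j]]]] i //= _ [<-]; point_eq.
- by move=> [|[|[|[|j]]]] [|[|[|[|j']]]] i i' //= _ _ [<-] [<-].
- by move=> [|[|[|[|[|[|k]]]]]] //= _; point_eq.
Qed.

(* E is attached to W ∪ N along the edge from (1/4, √15/4) to the origin. *)
Lemma domable_rhombi_WNE : domable rho_diamond -> domable rhombi_WNE.
Proof.
move=> dome.
have west_north := domable_rhombi_WN dome.
have east := domable_isometry (translate_isometry (1/4) 0) dome.
apply: (glue_domable (P1 := rhombi_WN) (P2 := map (translate (1/4) 0) rho_diamond)
  (P := rhombi_WNE)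
  (shareN := fun j => match j with 0 => Some 4 | 1 => Some 3 | _ => None end)
  (vertexN := fun k => match k with
    | 0 => inl 0 | 1 => inl 1 | 2 => inl 2 | 3 => inl 3 | 4 => inr 2
    | 5 => inr 3 | 6 => inl 4 | _ => inl 5 end)
  ord0 ord0); try by [].
- by move=> [|[|[|[|j]]]] i //= _ [<-]; point_eq.
- by move=> [|[|[|[|j]]]] [|[|[|[|j']]]] i i' //= _ _ [<-] [<-].
- by move=> [|[|[|[|[|[|[|[|k]]]]]]]] //= _; point_eq.
Qed.

(* S is attached to W ∪ N ∪ E along the path (-1/4, -√15/4), origin,
   (1/4, -√15/4); the origin becomes an interior vertex. *)
Lemma domable_rho_diamond_rho_diamond2 : domable rho_diamond -> domable rho_diamond2.
Proof.
move=> dome.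
have west_north_east := domable_rhombi_WNE dome.
have south := domable_isometry (translate_isometry 0 (-(s15/4))) dome.
apply: (glue_domable (P1 := rhombi_WNE) (P2 := map (translate 0 (-(s15/4))) rho_diamond)
  (P := rho_diamond2)
  (shareN := fun j => match j with
    | 0 => Some 7 | 1 => Some 6 | 2 => Some 5 | _ => None end)
  (vertexN := fun k => match k with
    | 0 => inl 0 | 1 => inl 1 | 2 => inl 2 | 3 => inl 3 | 4 => inl 4
    | 5 => inl 5 | 6 => inr 3 | _ => inl 7 end)
  ord0 ord0); try by [].
- by move=> [|[|[|[|j]]]] i //= _ [<-]; point_eq.
- by move=> [|[|[|[|j]]]] [|[|[|[|j']]]] i i' //= _ _ [<-] [<-] // _;
    rewrite /dist2 /pt /=; lra.
- by move=> [|[|[|[|[|[|[|[|k]]]]]]]] //= _; point_eq.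
Qed.

Theorem mainTheorem18 :
  ~ domable rho_diamond2 -> ~ domable tri221 /\ ~ domable rho_diamond.
Proof.
move=> no_dome.
split=> [/domable_tri221_rho_diamond2 | /domable_rho_diamond_rho_diamond2].
- exact: no_dome.
- exact: no_dome.
Qed.
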